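(* Let $(T,\eta,(-)^\#,\sqsubseteq,\Uparrow)$ be a while-monad on $\mathbf{Set}$, $(\Omega,\le)$ a complete lattice and $o:T\Omega\to\Omega$ a meet-preserving Eilenberg–Moore $T$-algebra such that $o(\bigsqcup_i c_i)=\bigwedge_i o(c_i)$ for every $\omega$-chain $(c_i)$ in $(T\Omega,\sqsubseteq_\Omega)$ and $o(\Uparrow_\Omega)=\top$. Then for every condition $b$ and program $P$, $\llbracket\mathtt{while}\ b\ \{P\}\rrbracket^c=\mu\Psi$, where $\mu\Psi$ is the least fixpoint, in the complete lattice of join-preserving maps $\mathcal P_\Omega(\mathbb M)\to\mathcal P_\Omega(\mathbb M)$ ordered pointwise, of $\Psi(f)=\lambda\phi.\ f(\llbracket P\rrbracket^c(\phi\wedge_{\mathbb M}\mathrm{grd}_b^{\mathrm{tt}}))\vee_{\mathbb M}(\phi\wedge_{\mathbb M}\mathrm{grd}_b^{\mathrm{ff}})$.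
   Context: Fix a set of values $\mathbb V$, a finite set of variables $X$, and memories $\mathbb M=\mathbb V^X$. Programs: $P::=\mathtt{skip}\mid P;P\mid x:=e\mid \mathtt{if}\ b\ \{P\}\ \mathtt{else}\ \{P\}\mid \mathtt{while}\ b\ \{P\}$. Each condition $b$ has a given interpretation $\llbracket b\rrbracket:\mathbb M\to\{\mathrm{ff},\mathrm{tt}\}$. A while-monad on $\mathbf{Set}$ is a monad $(T,\eta,(-)^\#)$ on $\mathbf{Set}$ together with an $\omega$-cpo structure $(\sqsubseteq_X,\Uparrow_X)$ (least element $\Uparrow_X$, sups $\bigsqcup$ of $\omega$-chains) on each $TX$, such that, with $\sqsubseteq_{X,Y}$ the pointwise order on Kleisli maps $\mathbf{Set}_T(X,Y)=\mathbf{Set}(X,TY)$ and $\Uparrow_{X,Y}=\lambda x.\Uparrow_Y$: Kleisli composition $g\bullet f=g^\#\circ f$ is monotone and $\omega$-continuous in each argument, and $f\bullet\Uparrow_{X,Y}=\Uparrow_{X,Z}$. Monadic semantics: each assignment has a given $\llbracket x:=e\rrbracket\in\mathbf{Set}_T(\mathbb M,\mathbb M)$, and $\llbracket\mathtt{skip}\rrbracket_T=\eta_{\mathbb M}$, $\llbracket P;P'\rrbracket_T=\llbracket P'\rrbracket_T\bullet\llbracket P\rrbracket_T$, $\llbracket x:=e\rrbracket_T=\llbracket x:=e\rrbracket$, $\llbracket\mathtt{if}\ b\ \{P_1\}\ \mathtt{else}\ \{P_2\}\rrbracket_T=\lambda\rho.$ if $\llbracket b\rrbracket\rho=\mathrm{tt}$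 then $\llbracket P_1\rrbracket_T(\rho)$ else $\llbracket P_2\rrbracket_T(\rho)$, $\llbracket\mathtt{while}\ b\ \{P\}\rrbracket_T=\mu\Phi$ (least fixpoint w.r.t. $\sqsubseteq_{\mathbb M,\mathbb M}$) with $\Phi(f)=\lambda\rho.$ if $\llbracket b\rrbracket\rho=\mathrm{tt}$ then $(f\bullet\llbracket P\rrbracket_T)(\rho)$ else $\eta_{\mathbb M}(\rho)$. $\mathcal P_\Omega(Y)=(\mathbf{Set}(Y,\Omega),\le_Y)$ with pointwise order and lattice operations $\wedge_Y,\vee_Y,\bot_Y,\top_Y$. An Eilenberg–Moore algebra $o$ is meet-preserving if each $\phi\mapsto o\circ T\phi:\mathcal P_\Omega(Y)\to\mathcal P_\Omega(TY)$ preserves arbitrary meets. For $f\in\mathbf{Set}_T(Y,Z)$, $wp^o(f)(\phi)=o\circ T\phi\circ f$ and $sp^o(f)$ is the left adjoint of $wp^o(f)$. The collecting semantics is $\llbracket P\rrbracket^c=sp^o(\llbracket P\rrbracket_T)$. $\mathrm{grd}_b^v(\rho)=\top$ if $\llbracket b\rrbracket\rho=v$, else $\bot$. *)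

From Stdlib Require Import List ClassicalEpsilon.
Set Implicit Arguments.

Record WhileMonad := {
  T : Type -> Type;
  ret : forall X, X -> T X;
  ext : forall X Y, (X -> T Y) -> T X -> T Y;
  le : forall X, T X -> T X -> Prop;
  bot : forall X, T X;
  sup : forall X, (nat -> T X) -> T X;
  ext_ret : forall X (t : T X), ext (@ret X) t = t;
  ext_ret_l : forall X Y (f : X -> T Y) x, ext f (ret x) = f x;
  ext_ext : forall X Y Z (f : X -> T Y) (g : Y -> T Z) t,
      ext g (ext f t) = ext (fun x => ext g (f x)) t;
  le_refl : forall X (t : T X), le t t;
  le_trans : forall X (t u v : T X), le t u -> le u v -> le t v;
  le_antisym : forall X (t u : T X), le t u -> le u t -> t = u;
  bot_least : forall X (t : T X), le (bot X) t;
  sup_ub : forall X (c : nat -> T X),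
      (forall n, le (c n) (c (S n))) -> forall n, le (c n) (sup c);
  sup_least : forall X (c : nat -> T X) (u : T X),
      (forall n, le (c n) (c (S n))) -> (forall n, le (c n) u) -> le (sup c) u;
  kcomp_mono_r : forall X Y Z (g : Y -> T Z) (f f' : X -> T Y),
      (forall x, le (f x) (f' x)) -> forall x, le (ext g (f x)) (ext g (f' x));
  kcomp_mono_l : forall X Y Z (g g' : Y -> T Z) (f : X -> T Y),
      (forall y, le (g y) (g' y)) -> forall x, le (ext g (f x)) (ext g' (f x));
  (* ... and omega-continuous in each argument (sups in Kleisli hom-sets
     are pointwise) *)
  kcomp_cont_r : forall X Y Z (g : Y -> T Z) (fs : nat -> X -> T Y),
      (forall n x, le (fs n x) (fs (S n) x)) ->
      forall x, ext g (sup (fun n => fs n x)) = sup (fun n => ext g (fs n x));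
  kcomp_cont_l : forall X Y Z (gs : nat -> Y -> T Z) (f : X -> T Y),
      (forall n y, le (gs n y) (gs (S n) y)) ->
      forall x, ext (fun y => sup (fun n => gs n y)) (f x)
                = sup (fun n => ext (gs n) (f x));
  kcomp_bot : forall Y Z (f : Y -> T Z), ext f (bot Y) = bot Z
}.

Arguments ret {w X}.
Arguments ext {w X Y}.
Arguments le {w X}.
Arguments bot {w}.
Arguments sup {w X}.

Section Kleisli.
Variable W : WhileMonad.
Definition kle {X Y : Type} (f g : X -> T W Y) : Prop := forall x, le (f x) (g x).
Definition kcomp {X Y Z : Type} (g : Y -> T W Z) (f : X -> T W Y) : X -> T W Z :=
  fun x => ext g (f x).
Definition Tmap {X Y : Type} (f : X -> Y) : T W X -> T W Y :=
  ext (fun x => ret (f x)).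
Definition is_klfp {X Y : Type} (F : (X -> T W Y) -> (X -> T W Y)) (f : X -> T W Y) :=
  (forall x, F f x = f x) /\ (forall g, (forall x, F g x = g x) -> kle f g).
Definition klfp {X Y : Type} (F : (X -> T W Y) -> (X -> T W Y)) : X -> T W Y :=
  epsilon (inhabits (fun _ => bot Y)) (is_klfp F).
End Kleisli.

Record CLattice := {
  car : Type;
  cle : car -> car -> Prop;
  cle_refl : forall x, cle x x;
  cle_trans : forall x y z, cle x y -> cle y z -> cle x z;
  cle_antisym : forall x y, cle x y -> cle y x -> x = y;
  Meet : (car -> Prop) -> car;
  Meet_lb : forall S x, S x -> cle (Meet S) x;
  Meet_glb : forall S y, (forall x, S x -> cle y x) -> cle y (Meet S);
  Join : (car -> Prop) -> car;
  Join_ub : forall S x, S x -> cle x (Join S);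
  Join_lub : forall S y, (forall x, S x -> cle x y) -> cle (Join S) y
}.

Arguments cle {c}.
Arguments Meet {c}.
Arguments Join {c}.

Section Lattice.
Variable L : CLattice.
Definition meet2 (a b : car L) : car L := Meet (fun x => x = a \/ x = b).
Definition join2 (a b : car L) : car L := Join (fun x => x = a \/ x = b).
Definition ltop : car L := Meet (fun _ => False).
Definition lbot : car L := Join (fun _ => False).

(* P_Omega(Y) = Set(Y, Omega) with pointwise order and operations *)
Definition ple {Y : Type} (phi psi : Y -> car L) := forall y, cle (phi y) (psi y).
Definition pmeet {Y : Type} (phi psi : Y -> car L) : Y -> car L :=
  fun y => meet2 (phi y) (psi y).
Definition pjoin {Y : Type} (phi psi : Y -> car L) : Y -> car L :=
  fun y => join2 (phi y) (psi y).
Definition pMeet {Y : Type} (S : (Y -> car L) -> Prop) : Y -> car L :=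
  fun y => Meet (fun w => exists phi, S phi /\ w = phi y).
Definition pJoin {Y : Type} (S : (Y -> car L) -> Prop) : Y -> car L :=
  fun y => Join (fun w => exists phi, S phi /\ w = phi y).

Definition join_preserving {Y Z : Type} (f : (Y -> car L) -> (Z -> car L)) :=
  forall (S : (Y -> car L) -> Prop) z,
    f (pJoin S) z = pJoin (fun psi => exists phi, S phi /\ psi = f phi) z.

Definition is_lfp_jp {Y : Type}
  (Psi : ((Y -> car L) -> (Y -> car L)) -> ((Y -> car L) -> (Y -> car L)))
  (f : (Y -> car L) -> (Y -> car L)) :=
  join_preserving f /\
  (forall phi y, Psi f phi y = f phi y) /\
  (forall g, join_preserving g -> (forall phi y, Psi g phi y = g phi y) ->
     forall phi y, cle (f phi y) (g phi y)).
End Lattice.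
Arguments meet2 {L}.
Arguments join2 {L}.
Arguments ple {L Y}.
Arguments pmeet {L Y}.
Arguments pjoin {L Y}.
Arguments pMeet {L Y}.
Arguments pJoin {L Y}.
Arguments join_preserving {L Y Z}.
Arguments is_lfp_jp {L Y}.

Section Algebra.
Variable W : WhileMonad.
Variable L : CLattice.
Variable o : T W (car L) -> car L.

Definition EM_algebra : Prop :=
  (forall x : car L, o (ret x) = x) /\
  (forall tt : T W (T W (car L)),
      o (Tmap W o tt) = o (ext (fun t => t) tt)).

(* each phi |-> o o T phi : P_Omega(Y) -> P_Omega(TY) preserves arbitrary meets *)
Definition meet_preserving : Prop :=
  forall (Y : Type) (S : (Y -> car L) -> Prop) (t : T W Y),
    o (Tmap W (pMeet S) t)
    = pMeet (fun psi => exists phi, S phi /\ psi = (fun u => o (Tmap W phi u))) t.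

Definition wp {Y Z : Type} (f : Y -> T W Z) (phi : Z -> car L) : Y -> car L :=
  fun y => o (Tmap W phi (f y)).

Definition is_left_adjoint {Y Z : Type}
  (g : (Y -> car L) -> (Z -> car L)) (h : (Z -> car L) -> (Y -> car L)) :=
  forall phi psi, ple (g phi) psi <-> ple phi (h psi).

Definition sp {Y Z : Type} (f : Y -> T W Z) : (Y -> car L) -> (Z -> car L) :=
  epsilon (inhabits (fun _ _ => lbot L)) (fun g => is_left_adjoint g (wp f)).
End Algebra.

Inductive prog (Var Expr Cond : Type) : Type :=
| Skip : prog Var Expr Cond
| Seq : prog Var Expr Cond -> prog Var Expr Cond -> prog Var Expr Cond
| Assign : Var -> Expr -> prog Var Expr Cond
| If : Cond -> prog Var Expr Cond -> prog Var Expr Cond -> prog Var Expr Cond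
| While : Cond -> prog Var Expr Cond -> prog Var Expr Cond.

Arguments Skip {Var Expr Cond}.
Arguments Seq {Var Expr Cond}.
Arguments Assign {Var Expr Cond}.
Arguments If {Var Expr Cond}.
Arguments While {Var Expr Cond}.

Section Semantics.
Variable W : WhileMonad.
Variables Var Val Expr Cond : Type.
Local Notation M := (Var -> Val).
Variable cond : Cond -> M -> bool.
Variable asg : Var -> Expr -> M -> T W M.

Definition Phi (b : Cond) (body : M -> T W M) (f : M -> T W M) : M -> T W M :=
  fun rho => if cond b rho then kcomp W f body rho else ret rho.

Fixpoint msem (P : prog Var Expr Cond) : M -> T W M :=
  match P with
  | Skip => fun rho => ret rho
  | Seq P1 P2 => kcomp W (msem P2) (msem P1)
  | Assign x e => asg x e
  | If b P1 P2 => fun rho => if cond b rho then msem P1 rho else msem P2 rho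
  | While b P1 => klfp W (Phi b (msem P1))
  end.

Variable L : CLattice.
Variable o : T W (car L) -> car L.

Definition csem (P : prog Var Expr Cond) : (M -> car L) -> (M -> car L) :=
  @sp W L o _ _ (msem P).

Definition grd (b : Cond) (v : bool) : M -> car L :=
  fun rho => if Bool.eqb (cond b rho) v then ltop L else lbot L.

Definition Psi (b : Cond) (P : prog Var Expr Cond)
  (f : (M -> car L) -> (M -> car L)) : (M -> car L) -> (M -> car L) :=
  fun phi => pjoin (f (csem P (pmeet phi (grd b true))))
                   (pmeet phi (grd b false)).
End Semantics.

(* Write [h] for the monadic semantics of [while b {P}], i.e. the least
   fixpoint of Phi in the Kleisli hom-set, and [wp] for the predicate
   transformer phi |-> o o T phi o f.  The proof has four ingredients:
   - Galois connections: a left adjoint is unique, monotone and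
     join-preserving; meet preservation of [o] makes [wp f] monotone and
     gives it a left adjoint, so [sp f] really is the left adjoint of [wp f].
   - Kleene's theorem in the Kleisli hom-sets: since Phi is monotone and
     omega-continuous, [h] is the sup of the chain of iterates of Phi
     from the bottom map.
   - [wp] turns the Kleisli structure into predicate-transformer
     structure: composition becomes composition, [eta] the identity, the
     bottom map the top predicate and sups of chains meets (the last two
     are exactly the hypotheses on [o]); hence [wp h] satisfies the loop
     unfolding equation.
   - The main argument: by the unfolding equation, Psi(sp h) is again a
     left adjoint of [wp h], hence equals [sp h]; and for any fixpoint g
     of Psi, phi <= wp(Phi^n(bot))(g phi) for every n by induction, so
     phi <= wp h (g phi), i.e. sp h phi <= g phi by adjunction. *)
From Stdlib Require Import Bool FunctionalExtensionality ClassicalEpsilon.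
Set Implicit Arguments.

Section LatticeFacts.
Variable L : CLattice.

Lemma meet2_lb_l (a c : car L) : cle (meet2 a c) a.
Proof. apply Meet_lb; auto. Qed.

Lemma meet2_lb_r (a c : car L) : cle (meet2 a c) c.
Proof. apply Meet_lb; auto. Qed.

Lemma meet2_glb (a c d : car L) : cle d a -> cle d c -> cle d (meet2 a c).
Proof. intros; apply Meet_glb; intros x [-> | ->]; auto. Qed.

Lemma join2_ub_l (a c : car L) : cle a (join2 a c).
Proof. apply Join_ub; auto. Qed.

Lemma join2_ub_r (a c : car L) : cle c (join2 a c).
Proof. apply Join_ub; auto. Qed.

Lemma join2_lub (a c d : car L) : cle a d -> cle c d -> cle (join2 a c) d.
Proof. intros; apply Join_lub; intros x [-> | ->]; auto. Qed.

Lemma ltop_greatest (a : car L) : cle a (ltop L).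
Proof. apply Meet_glb; intros _ []. Qed.

Lemma lbot_least (a : car L) : cle (lbot L) a.
Proof. apply Join_lub; intros _ []. Qed.
End LatticeFacts.

Section GaloisConnections.
Variables (L : CLattice) (Y Z : Type).
Variable h : (Z -> car L) -> (Y -> car L).

Lemma adj_unit (g : (Y -> car L) -> Z -> car L) :
  is_left_adjoint L g h -> forall p, ple p (h (g p)).
Proof. intros Hgh p. apply Hgh. intro; apply cle_refl. Qed.

Lemma adj_mono (g : (Y -> car L) -> Z -> car L) :
  is_left_adjoint L g h -> forall p q, ple p q -> ple (g p) (g q).
Proof.
  intros Hgh p q Hpq. apply Hgh. intro y.
  eapply cle_trans; [apply Hpq | apply (adj_unit Hgh)].
Qed.

Lemma adj_join_preserving (g : (Y -> car L) -> Z -> car L) :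
  is_left_adjoint L g h -> join_preserving g.
Proof.
  intros Hgh S z. apply cle_antisym.
  - revert z. apply Hgh. intro y. apply Join_lub.
    intros w [p [Hp ->]]. revert y. apply Hgh.
    intro z. apply Join_ub. exists (g p). split; [exists p; auto | reflexivity].
  - apply Join_lub. intros w [r [[p [Hp ->]] ->]].
    apply (adj_mono Hgh). intro y. apply Join_ub. exists p; auto.
Qed.

Lemma adj_unique (g g' : (Y -> car L) -> Z -> car L) :
  is_left_adjoint L g h -> is_left_adjoint L g' h ->
  forall p z, g p z = g' p z.
Proof.
  intros Hg Hg' p z. apply cle_antisym.
  - revert z. apply Hg, Hg'. intro; apply cle_refl.
  - revert z. apply Hg', Hg. intro; apply cle_refl.
Qed.
End GaloisConnections.

Section KleisliKleene.
Variables (W : WhileMonad) (X Y : Type).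

Lemma sup_const (t : T W Y) : sup (fun _ : nat => t) = t.
Proof.
  apply le_antisym.
  - apply sup_least; intros; apply le_refl.
  - apply (sup_ub W _ (fun _ => t) (fun _ => le_refl W _ t) 0).
Qed.

Lemma sup_shift (c : nat -> T W Y) :
  (forall n, le (c n) (c (S n))) -> sup (fun n => c (S n)) = sup c.
Proof.
  intro Hc. apply le_antisym.
  - apply sup_least; [intro n; apply Hc |].
    intro n. apply (sup_ub W _ c Hc (S n)).
  - apply sup_least; [exact Hc |].
    intro n. eapply le_trans; [apply Hc |].
    apply (sup_ub W _ (fun n => c (S n)) (fun n => Hc (S n)) n).
Qed.

Variable F : (X -> T W Y) -> (X -> T W Y).
Hypothesis F_mono : forall g g', kle W g g' -> kle W (F g) (F g').
Hypothesis F_cont : forall gs : nat -> X -> T W Y,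
  (forall n x, le (gs n x) (gs (S n) x)) ->
  forall x, F (fun y => sup (fun n => gs n y)) x = sup (fun n => F (gs n) x).

Fixpoint kiter (n : nat) : X -> T W Y :=
  match n with 0 => fun _ => bot Y | S n => F (kiter n) end.

Lemma kiter_chain n x : le (kiter n x) (kiter (S n) x).
Proof.
  revert x; induction n as [|n IH]; intro x.
  - apply bot_least.
  - apply F_mono. exact IH.
Qed.

Definition kleene (x : X) : T W Y := sup (fun n => kiter n x).

Lemma kleene_is_klfp : is_klfp W F kleene.
Proof.
  split.
  - intro x. unfold kleene. rewrite (F_cont kiter kiter_chain x).
    exact (sup_shift _ (fun n => kiter_chain n x)).
  - intros g Hg x. apply sup_least; [intro; apply kiter_chain |].
    intro n. revert x. induction n as [|n IH]; intro x.
    + apply bot_least.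
    + rewrite <- Hg. apply F_mono. exact IH.
Qed.

(* Hence the fixpoint chosen by [klfp] exists, and it is the Kleene one. *)
Lemma klfp_is_klfp : is_klfp W F (klfp W F).
Proof.
  apply (epsilon_spec (inhabits (fun _ : X => bot Y)) (is_klfp W F)).
  exists kleene. exact kleene_is_klfp.
Qed.

Lemma klfp_kleene x : klfp W F x = kleene x.
Proof.
  destruct klfp_is_klfp as [Hfix Hleast].
  destruct kleene_is_klfp as [Kfix Kleast].
  apply le_antisym; [apply Hleast, Kfix | apply Kleast, Hfix].
Qed.
End KleisliKleene.
Arguments kiter {W X Y} F n _.

Section WeakestPreconditions.
Variables (W : WhileMonad) (L : CLattice) (o : T W (car L) -> car L).
Hypothesis Halg : EM_algebra W L o.
Hypothesis Hmeet : meet_preserving W L o.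

(* Monotonicity: meet preservation applied to the two-element family {p, q}. *)
Lemma wp_mono Y Z (f : Y -> T W Z) (p q : Z -> car L) :
  ple p q -> ple (wp W L o f p) (wp W L o f q).
Proof.
  intros Hpq y. unfold wp.
  set (S := fun r : Z -> car L => r = p \/ r = q).
  assert (Ep : pMeet S = p).
  { extensionality z. apply cle_antisym.
    - apply Meet_lb. exists p. split; [left |]; reflexivity.
    - apply Meet_glb. intros w [r [[-> | ->] ->]]; [apply cle_refl | apply Hpq]. }
  rewrite <- Ep, (Hmeet S (f y)). apply Meet_lb.
  exists (fun u => o (Tmap W q u)). split; [| reflexivity].
  exists q. split; [right |]; reflexivity.
Qed.

Definition sp_formula Y Z (f : Y -> T W Z) (p : Y -> car L) : Z -> car L :=
  pMeet (fun r => ple p (wp W L o f r)).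

Lemma sp_formula_left_adjoint Y Z (f : Y -> T W Z) :
  is_left_adjoint L (sp_formula f) (wp W L o f).
Proof.
  intros p q; split.
  - intros Hq y. eapply cle_trans; [| apply (wp_mono f Hq)].
    unfold wp at 1, sp_formula. rewrite Hmeet. apply Meet_glb.
    intros w [r [[r' [Hr' ->]] ->]]. apply Hr'.
  - intros Hp z. apply Meet_lb. exists q; auto.
Qed.

Lemma sp_left_adjoint Y Z (f : Y -> T W Z) :
  is_left_adjoint L (sp W L o f) (wp W L o f).
Proof.
  apply (epsilon_spec (inhabits (fun _ _ => lbot L))
           (fun g => is_left_adjoint L g (wp W L o f))).
  exists (sp_formula f). apply sp_formula_left_adjoint.
Qed.

(* The multiplication law of the algebra: o o k^# = o o T(o o k). *)
Lemma o_ext Y (k : Y -> T W (car L)) (t : T W Y) :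
  o (ext k t) = o (Tmap W (fun y => o (k y)) t).
Proof.
  destruct Halg as [_ Hmult].
  assert (Ek : ext k t = ext (fun u => u) (Tmap W k t)).
  { unfold Tmap. rewrite ext_ext. f_equal.
    extensionality x. rewrite ext_ret_l. reflexivity. }
  rewrite Ek, <- Hmult. unfold Tmap. rewrite ext_ext. do 2 f_equal.
  extensionality x. rewrite ext_ret_l. reflexivity.
Qed.

Lemma wp_kcomp X Y Z (g : Y -> T W Z) (f : X -> T W Y) p x :
  wp W L o (kcomp W g f) p x = wp W L o f (wp W L o g p) x.
Proof. unfold wp, kcomp, Tmap at 1. rewrite ext_ext, o_ext. reflexivity. Qed.

Lemma wp_ret X (p : X -> car L) x : o (Tmap W p (ret x)) = p x.
Proof. unfold Tmap. rewrite ext_ret_l. apply (proj1 Halg). Qed.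

Lemma wp_bot X Y (p : Y -> car L) (x : X) :
  o (bot (car L)) = ltop L -> wp W L o (fun _ => bot Y) p x = ltop L.
Proof. intro Hbot. unfold wp, Tmap. rewrite kcomp_bot. exact Hbot. Qed.

Lemma wp_sup X Y (fs : nat -> X -> T W Y) (p : Y -> car L) x :
  (forall c : nat -> T W (car L), (forall n, le (c n) (c (S n))) ->
     o (sup c) = Meet (fun w => exists n, w = o (c n))) ->
  (forall n x, le (fs n x) (fs (S n) x)) ->
  wp W L o (fun x => sup (fun n => fs n x)) p x
  = Meet (fun w => exists n, w = wp W L o (fs n) p x).
Proof.
  intros Hchain Hfs. unfold wp, Tmap.
  rewrite (kcomp_cont_r W _ (fun y => ret (p y)) fs Hfs).
  apply Hchain. intro n. apply kcomp_mono_r. intro; apply Hfs.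
Qed.
End WeakestPreconditions.
Arguments wp_bot {W L o X Y} p x.
Arguments wp_sup {W L o X Y fs} p x.

Section LoopFunctional.
Variables (W : WhileMonad) (Var Val Cond : Type).
Local Notation M := (Var -> Val).
Variables (cond : Cond -> M -> bool) (b : Cond) (body : M -> T W M).

Lemma Phi_mono g g' : kle W g g' -> kle W (Phi W cond b body g) (Phi W cond b body g').
Proof.
  intros Hg x. unfold Phi, kcomp. destruct (cond b x).
  - apply kcomp_mono_l. exact Hg.
  - apply le_refl.
Qed.

Lemma Phi_cont (gs : nat -> M -> T W M) :
  (forall n x, le (gs n x) (gs (S n) x)) ->
  forall x, Phi W cond b body (fun y => sup (fun n => gs n y)) x
            = sup (fun n => Phi W cond b body (gs n) x).
Proof.
  intros Hgs x. unfold Phi, kcomp. destruct (cond b x).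
  - apply kcomp_cont_l. exact Hgs.
  - symmetry. apply sup_const.
Qed.

Lemma wp_Phi (L : CLattice) (o : T W (car L) -> car L) :
  EM_algebra W L o -> forall g psi rho,
  wp W L o (Phi W cond b body g) psi rho
  = if cond b rho then wp W L o body (wp W L o g psi) rho else psi rho.
Proof.
  intros Halg g psi rho. unfold Phi. unfold wp at 1. destruct (cond b rho).
  - apply (wp_kcomp Halg).
  - apply (wp_ret Halg).
Qed.
End LoopFunctional.
Arguments Phi_cont {W Var Val Cond}.

Section Guards.
Variables (L : CLattice) (Var Val Cond : Type).
Local Notation M := (Var -> Val).
Variables (cond : Cond -> M -> bool) (b : Cond).

Lemma grd_meet_pass (phi : M -> car L) rho v :
  cond b rho = v -> cle (phi rho) (pmeet phi (grd cond L b v) rho).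
Proof.
  intros <-. unfold pmeet, grd. rewrite eqb_reflx.
  apply meet2_glb; [apply cle_refl | apply ltop_greatest].
Qed.

Lemma grd_meet_block (phi : M -> car L) rho v a :
  cond b rho <> v -> cle (pmeet phi (grd cond L b v) rho) a.
Proof.
  intro Hv. unfold pmeet, grd. rewrite (proj2 (eqb_false_iff _ _) Hv).
  eapply cle_trans; [apply meet2_lb_r | apply lbot_least].
Qed.
End Guards.
Arguments grd_meet_pass {L Var Val Cond cond b phi rho v}.
Arguments grd_meet_block {L Var Val Cond cond b phi rho v a}.

Section WhileLoop.
Variables (W : WhileMonad) (L : CLattice) (o : T W (car L) -> car L).
Variables (Var Val Expr Cond : Type).
Variables (cond : Cond -> (Var -> Val) -> bool)
          (asg : Var -> Expr -> (Var -> Val) -> T W (Var -> Val)).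
Hypothesis Halg : EM_algebra W L o.
Hypothesis Hmeet : meet_preserving W L o.
Hypothesis Hchain : forall c : nat -> T W (car L),
  (forall n, le (c n) (c (S n))) -> o (sup c) = Meet (fun w => exists n, w = o (c n)).
Hypothesis Hbot : o (bot (car L)) = ltop L.
Variables (b : Cond) (P : prog Var Expr Cond).

Local Notation body := (msem W cond asg P).
Local Notation loop := (msem W cond asg (While b P)).
Local Notation F := (Phi W cond b body).
Local Notation wp := (wp W L o).
Local Notation Psi := (Psi W cond asg L o b P).
Local Notation csem := (csem W cond asg L o).

Lemma wp_loop_unfold psi rho :
  wp loop psi rho = if cond b rho then wp body (wp loop psi) rho else psi rho.
Proof.
  rewrite <- (wp_Phi cond b body Halg). unfold wp.
  rewrite (proj1 (klfp_is_klfp _ (Phi_mono cond b body) (Phi_cont cond b body))).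
  reflexivity.
Qed.

(* Since [loop] is the sup of the iterates, wp of it is the meet of theirs. *)
Lemma wp_loop_meet psi rho :
  wp loop psi rho = Meet (fun w => exists n, w = wp (kiter F n) psi rho).
Proof.
  unfold wp at 1. simpl msem.
  rewrite (klfp_kleene _ (Phi_mono cond b body) (Phi_cont cond b body)).
  exact (wp_sup psi rho Hchain (kiter_chain _ (Phi_mono cond b body))).
Qed.

Lemma Psi_left_adjoint : is_left_adjoint L (Psi (csem (While b P))) (wp loop).
Proof.
  assert (Aloop := sp_left_adjoint Hmeet loop).
  assert (Abody := sp_left_adjoint Hmeet body).
  intros phi psi. unfold Psi, pjoin. split.
  - intros Hpsi rho. rewrite wp_loop_unfold. destruct (cond b rho) eqn:E.
    + assert (Htt : ple (csem (While b P) (csem P (pmeet phi (grd cond L b true)))) psi).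
      { intro z. eapply cle_trans; [apply join2_ub_l | apply Hpsi]. }
      apply Aloop, Abody in Htt.
      eapply cle_trans; [apply (grd_meet_pass E) | apply Htt].
    + eapply cle_trans; [apply (grd_meet_pass E) |].
      eapply cle_trans; [apply join2_ub_r | apply Hpsi].
  - intros Hphi z. apply join2_lub.
    + revert z. apply Aloop, Abody. intro rho. destruct (cond b rho) eqn:E.
      * eapply cle_trans; [apply meet2_lb_l |].
        eapply cle_trans; [apply Hphi |]. rewrite wp_loop_unfold, E. apply cle_refl.
      * apply grd_meet_block. rewrite E. discriminate.
    + destruct (cond b z) eqn:E.
      * apply grd_meet_block. rewrite E. discriminate.
      * eapply cle_trans; [apply meet2_lb_l |].
        eapply cle_trans; [apply Hphi |]. rewrite wp_loop_unfold, E. apply cle_refl.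
Qed.

Lemma csem_loop_fixpoint phi rho :
  Psi (csem (While b P)) phi rho = csem (While b P) phi rho.
Proof.
  exact (adj_unique Psi_left_adjoint (sp_left_adjoint Hmeet loop) phi rho).
Qed.

Lemma iterate_bound (g : ((Var -> Val) -> car L) -> (Var -> Val) -> car L) :
  (forall phi rho, Psi g phi rho = g phi rho) ->
  forall n phi, ple phi (wp (kiter F n) (g phi)).
Proof.
  intros Hg n. induction n as [|n IH]; intros phi rho.
  - simpl kiter. rewrite (wp_bot _ _ Hbot). apply ltop_greatest.
  - simpl kiter. rewrite (wp_Phi cond b body Halg). destruct (cond b rho) eqn:E.
    + assert (Hstep : ple (csem P (pmeet phi (grd cond L b true)))
                          (wp (kiter F n) (g phi))).
      { intro z. eapply cle_trans; [apply IH |].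
        apply (wp_mono Hmeet). intro w. rewrite <- (Hg phi w). apply join2_ub_l. }
      apply (sp_left_adjoint Hmeet body) in Hstep.
      eapply cle_trans; [apply (grd_meet_pass E) | apply Hstep].
    + rewrite <- Hg. eapply cle_trans; [apply (grd_meet_pass E) |].
      apply join2_ub_r.
Qed.

Lemma csem_loop_least (g : ((Var -> Val) -> car L) -> (Var -> Val) -> car L) :
  (forall phi rho, Psi g phi rho = g phi rho) ->
  forall phi rho, cle (csem (While b P) phi rho) (g phi rho).
Proof.
  intros Hg phi. apply (sp_left_adjoint Hmeet loop). intro rho.
  rewrite wp_loop_meet. apply Meet_glb. intros w [n ->].
  exact (iterate_bound g Hg n phi rho).
Qed.
End WhileLoop.

Theorem mainTheorem4
  (W : WhileMonad) (L : CLattice) (o : T W (car L) -> car L)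
  (Var Val Expr Cond : Type)
  (Hfin : exists l : list Var, forall x : Var, List.In x l)
  (cond : Cond -> (Var -> Val) -> bool)
  (asg : Var -> Expr -> (Var -> Val) -> T W (Var -> Val))
  (Halg : EM_algebra W L o)
  (Hmeet : meet_preserving W L o)
  (Hchain : forall c : nat -> T W (car L),
      (forall n, le (c n) (c (S n))) ->
      o (sup c) = Meet (fun w => exists n, w = o (c n)))
  (Hbot : o (bot (car L)) = ltop L)
  (b : Cond) (P : prog Var Expr Cond) :
  is_lfp_jp (Psi W cond asg L o b P) (csem W cond asg L o (While b P)).
Proof.
  split; [| split].
  - exact (adj_join_preserving (sp_left_adjoint Hmeet _)).
  - apply csem_loop_fixpoint; assumption.
  - intros g _ Hg. apply csem_loop_least; assumption.
Qed.
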